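(* Let $|V|,S,p,d,d_w$ be positive integers. Let $C\in\mathbb{R}^{(|V|+1)\times p}$ be a token-embedding matrix whose $i$-th row is $c_i^\top$, where index $|V|+1$ is the \texttt{[MASK]} token, and let $P\in\mathbb{R}^{S\times p}$ be a positional-encoding matrix. Let $W^V\in\mathbb{R}^{d\times p}$, $W^Q,W^K\in\mathbb{R}^{d_w\times p}$, $W^O\in\mathbb{R}^{d\times p}$, $W'\in\mathbb{R}^{p\times p}$, $W''\in\mathbb{R}^{|V|\times p}$. For a masked sentence given by a matrix $\overline{X}\in\{0,1\}^{S\times(|V|+1)}$ whose rows are one-hot vectors, with masked position $m\in[S]$ (so the $m$-th row of $\overline{X}$ is the one-hot vector of index $|V|+1$) and masked (target) token $b\in[|V|]$, define the single-head single-layer attention model: $X'=\overline{X}C+P$; $X^{\mathrm{attn}}=\mathrm{softmax}\big(X'(W^Q)^\top W^K(X')^\top/\sqrt{d_w}\big)X'(W^V)^\top$ (softmax taken row-wise); $Z=X^{\mathrm{attn}}W^O$; $Z'=X'+Z$; $Z''=Z'+Z'(W')^\top$ (i.e. each row $Z'_i$ is mapped to $Z'_i+W'Z'_i$); and $\hat y=\mathrm{softmax}(W''Z''_m)\in\mathbb{R}^{|V|}$, where $Z''_m$ is the $m$-th row of $Z''$ viewed as a column vector. Let $L_{\mathrm{MLM}}(m,b)=-\log \hat y_b$ be the masked-language-modeling (cross-entropy) loss. Then there exist $g\in\mathbb{R}^{|V|}$, $D\in\mathbb{R}^{|V|\times S}$, $W^{LOV}\in\mathbb{R}^{|V|\times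 p}$ and $W^{KQ}\in\mathbb{R}^{p\times p}$, determined by the parameters $C,P,W^V,W^Q,W^K,W^O,W',W''$ alone (not depending on $\overline{X}$, $m$ or $b$), such that for every such $\overline{X},m,b$, \[ L_{\mathrm{MLM}}(m,b) = - \frac{\sum_{j=1}^S\theta(j,m)\chi(j,m,b) }{\sum_{j=1}^S \theta(j,m)} +\log\left( \sum_{k=1}^{|V|} \exp\left( \frac{\sum_{j=1}^S\theta(j,m)\chi(j,m,k) }{\sum_{j=1}^S \theta(j,m)} \right)\right), \] where \[ \theta(j,m) = \exp\left(\frac{ e_j^\top (\overline{X} C+P) W^{KQ} (c_{|V|+1} + P^\top e_m)}{\sqrt{d_w}} \right),\qquad \chi(j,m,k) = \left( W^{LOV} (\overline{X} C+P)^\top e_j + g + D e_m \right)_k, \] and $e_j\in\{0,1\}^S$ denotes the $j$-th standard basis vector.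
   Context: $\mathrm{softmax}$ of a vector $v$ is the vector with entries $e^{v_k}/\sum_l e^{v_l}$; $(v)_k$ denotes the $k$-th entry of a vector $v$; $[n]=\{1,\dots,n\}$. *)

From mathcomp Require Import all_boot all_order all_algebra.
From mathcomp Require Import all_classical all_reals.
From mathcomp Require Import sequences exp.
Set Implicit Arguments. Unset Strict Implicit. Unset Printing Implicit Defensive.
Import Order.TTheory GRing.Theory Num.Theory.
Local Open Scope ring_scope.

Section Model.
Variable R : realType.

Definition rsoftmax (m n : nat) (A : 'M[R]_(m, n)) : 'M[R]_(m, n) :=
  \matrix_(i, j) (expR (A i j) / \sum_(l < n) expR (A i l)).

Definition csoftmax (n : nat) (v : 'cV[R]_n) : 'cV[R]_n :=
  \col_i (expR (v i 0) / \sum_(l < n) expR (v l 0)).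

Variables (nV S p d dw : nat).

Definition Xprime (C : 'M[R]_(nV.+1, p)) (P : 'M[R]_(S, p))
  (Xbar : 'M[R]_(S, nV.+1)) : 'M[R]_(S, p) := Xbar *m C + P.

Definition yhat (C : 'M[R]_(nV.+1, p)) (P : 'M[R]_(S, p))
  (WV : 'M[R]_(d, p)) (WQ WK : 'M[R]_(dw, p)) (WO : 'M[R]_(d, p))
  (W1 : 'M[R]_(p, p)) (W2 : 'M[R]_(nV, p))
  (Xbar : 'M[R]_(S, nV.+1)) (m : 'I_S) : 'cV[R]_nV :=
  let X' := Xprime C P Xbar in
  let Xattn := rsoftmax ((Num.sqrt (dw%:R))^-1 *: (X' *m WQ^T *m WK *m X'^T))
                 *m X' *m WV^T in
  let Z := Xattn *m WO in
  let Z' := X' + Z in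
  let Z'' := Z' + Z' *m W1^T in
  csoftmax (W2 *m (row m Z'')^T).

Definition loss_MLM C P WV WQ WK WO W1 W2 Xbar (m : 'I_S) (b : 'I_nV) : R :=
  - ln (yhat C P WV WQ WK WO W1 W2 Xbar m b 0).

End Model.

From mathcomp Require Import all_boot all_order all_algebra.
From mathcomp Require Import all_classical all_reals.
From mathcomp Require Import sequences exp.
Set Implicit Arguments. Unset Strict Implicit. Unset Printing Implicit Defensive.
Import Order.TTheory GRing.Theory Num.Theory.
Local Open Scope ring_scope.

(* The query of the masked position is x_m = c_{|V|+1} + P^T e_m whatever the
   sentence, and everything after the attention softmax is linear: the logits
   W'' Z''_m are Q x_m + W^{LOV} X'^T a with Q = W''(I + W'),
   W^{LOV} = Q (W^O)^T W^V and a the m-th row of the attention matrix, whose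
   entries are theta(j,m) / sum_j theta(j,m).  These weights sum to 1, so the
   constant Q x_m = g + D e_m moves under the weighted mean; finally the
   cross-entropy of a softmax is minus the target logit plus the log-sum-exp
   of all logits. *)

Lemma neg_ln_csoftmax (R : realType) n (v : 'cV[R]_n) (b : 'I_n) :
  - ln (csoftmax v b 0) = - v b 0 + ln (\sum_(k < n) expR (v k 0)).
Proof.
have sum_gt0 : 0 < \sum_(k < n) expR (v k 0).
  by rewrite (bigD1 b) //= ltr_pwDl ?expR_gt0 // sumr_ge0 // => k _; rewrite expR_ge0.
by rewrite mxE lnM ?posrE ?invr_gt0 ?expR_gt0 // lnV ?posrE // expRK opprD opprK.
Qed.

Lemma row_onehot_mul (R : pzSemiRingType) m n p (X : 'M[R]_(m, n))
    (C : 'M[R]_(n, p)) (i : 'I_m) (k : 'I_n) :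
  (forall j, X i j = (j == k)%:R) -> row i (X *m C) = row k C.
Proof.
move=> Xi; rewrite row_mul [RHS]rowE; congr (_ *m _).
by apply/rowP => j; rewrite !mxE Xi eq_sym.
Qed.

Lemma bilinear_form_mxE (R : comPzRingType) m n (X : 'M[R]_(m, n))
    (A : 'M[R]_n) (i j : 'I_m) :
  ((delta_mx j 0 : 'cV_m)^T *m X *m A^T *m (row i X)^T) 0 0 = (X *m A *m X^T) i j.
Proof.
rewrite trmx_delta -rowE.
transitivity ((row j X *m A^T *m (row i X)^T)^T 0 0); first by rewrite [RHS]mxE.
rewrite !trmx_mul !trmxK mulmxA.
by rewrite -row_mul tr_row colE mulmxA -row_mul -colE !mxE.
Qed.

Lemma addr_weighted_mean (F : fieldType) n (w u : 'I_n -> F) (c : F) :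
  \sum_(j < n) w j != 0 ->
  c + \sum_(j < n) u j * (w j / \sum_(l < n) w l)
    = (\sum_(j < n) w j * (u j + c)) / \sum_(j < n) w j.
Proof.
move=> W_neq0; under [in RHS]eq_bigr => j _ do rewrite mulrDr.
rewrite big_split /= -mulr_suml mulrDl mulrAC divff // mul1r addrC mulr_suml.
by congr (_ + _); apply: eq_bigr => j _; rewrite mulrA [u j * _]mulrC.
Qed.

Section AttentionLayer.
Variables (R : realType) (nV S p d dw : nat).
Variables (C : 'M[R]_(nV.+1, p)) (P : 'M[R]_(S, p)) (WV : 'M[R]_(d, p))
  (WQ WK : 'M[R]_(dw, p)) (WO : 'M[R]_(d, p)) (W1 : 'M[R]_(p, p))
  (W2 : 'M[R]_(nV, p)).

Definition readout : 'M[R]_(nV, p) := W2 *m (1%:M + W1).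

Definition attention (Xbar : 'M[R]_(S, nV.+1)) : 'M[R]_S :=
  let X' := Xprime C P Xbar in
  rsoftmax ((Num.sqrt dw%:R)^-1 *: (X' *m WQ^T *m WK *m X'^T)).

Lemma yhat_affine_logits (Xbar : 'M[R]_(S, nV.+1)) (m : 'I_S) :
  let X' := Xprime C P Xbar in
  yhat C P WV WQ WK WO W1 W2 Xbar m
    = csoftmax (readout *m (row m X')^T
                + readout *m WO^T *m WV *m X'^T *m (row m (attention Xbar))^T).
Proof.
move=> X'; rewrite /yhat /=; congr csoftmax.
rewrite -/X' -[rsoftmax _]/(attention Xbar); set Z' := X' + _.
rewrite -{1}[Z']mulmx1 -mulmxDr (row_mul m Z') trmx_mul linearD /= trmx1 trmxK.
rewrite mulmxA -/readout /Z' linearD /= !row_mul.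
by rewrite linearD /= mulmxDr !trmx_mul !trmxK !mulmxA.
Qed.

End AttentionLayer.

Theorem lemma1 (R : realType) (nV S p d dw : nat)
  (hV : (0 < nV)%N) (hS : (0 < S)%N) (hp : (0 < p)%N) (hd : (0 < d)%N)
  (hdw : (0 < dw)%N)
  (C : 'M[R]_(nV.+1, p)) (P : 'M[R]_(S, p))
  (WV : 'M[R]_(d, p)) (WQ WK : 'M[R]_(dw, p)) (WO : 'M[R]_(d, p))
  (W1 : 'M[R]_(p, p)) (W2 : 'M[R]_(nV, p)) :
  exists (g : 'cV[R]_nV) (D : 'M[R]_(nV, S)) (WLOV : 'M[R]_(nV, p))
         (WKQ : 'M[R]_(p, p)),
  forall (Xbar : 'M[R]_(S, nV.+1)) (m : 'I_S) (b : 'I_nV),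
    (forall i : 'I_S, exists k : 'I_nV.+1,
        forall j : 'I_nV.+1, Xbar i j = (j == k)%:R) ->
    (forall j : 'I_nV.+1, Xbar m j = (j == ord_max)%:R) ->
    let X' := Xbar *m C + P in
    let e := fun j : 'I_S => (delta_mx j 0 : 'cV[R]_S) in
    let theta := fun j : 'I_S =>
      expR (((e j)^T *m X' *m WKQ *m ((row ord_max C)^T + P^T *m e m)) 0 0
            / Num.sqrt (dw%:R)) in
    let chi := fun (j : 'I_S) (k : 'I_nV) =>
      (WLOV *m X'^T *m e j + g + D *m e m) k 0 in
    loss_MLM C P WV WQ WK WO W1 W2 Xbar m b =
      - ((\sum_(j < S) theta j * chi j b) / \sum_(j < S) theta j)
      + ln (\sum_(k < nV) expR ((\sum_(j < S) theta j * chi j k)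
                                / \sum_(j < S) theta j)).
Proof.
pose Q := readout W1 W2.
exists (Q *m (row ord_max C)^T), (Q *m P^T), (Q *m WO^T *m WV), (WQ^T *m WK)^T.
move=> Xbar m b _ Xbar_m X' e theta chi.
have query_m : (row ord_max C)^T + P^T *m e m = (row m X')^T.
  by rewrite /X' linearD /= (row_onehot_mul C Xbar_m) linearD /= !tr_row [col m _]colE.
have thetaE j : theta j = expR (((Num.sqrt dw%:R)^-1 *: (X' *m WQ^T *m WK *m X'^T)) m j).
  by rewrite /theta query_m bilinear_form_mxE [in RHS]mxE mulrC mulmxA.
have theta_sum_gt0 : 0 < \sum_(j < S) theta j.
  rewrite (bigD1 (Ordinal hS)) //= ltr_pwDl ?thetaE ?expR_gt0 //.
  by rewrite sumr_ge0 // => j _; rewrite thetaE expR_ge0.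
have attentionE j : attention C P WQ WK Xbar m j = theta j / \sum_(l < S) theta l.
  by rewrite mxE thetaE; under [in RHS]eq_bigr => l _ do rewrite thetaE.
have logitsE k : (Q *m (row m X')^T + Q *m WO^T *m WV *m X'^T
                   *m (row m (attention C P WQ WK Xbar))^T) k 0
                 = (\sum_(j < S) theta j * chi j k) / \sum_(j < S) theta j.
  have chiE j : chi j k = (Q *m WO^T *m WV *m X'^T) k j + (Q *m (row m X')^T) k 0.
    rewrite /chi -addrA -[Q *m P^T *m _]mulmxA -mulmxDr query_m.
    by rewrite [LHS]mxE /e -colE mxE.
  rewrite [LHS]mxE [X in _ + X]mxE.
  under eq_bigr => j _ do rewrite [_^T _ _]mxE [row _ _ _ _]mxE attentionE.
  under [in RHS]eq_bigr => j _ do rewrite chiE.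
  exact/addr_weighted_mean/lt0r_neq0.
rewrite /loss_MLM yhat_affine_logits neg_ln_csoftmax.
congr (- _ + ln _); first exact: logitsE.
by apply: eq_bigr => k _; rewrite -logitsE.
Qed.
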